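(* Let $d$ be a positive integer and let $\{x_1,\dots,x_{2d}\}\subset\mathbb{S}^{d-1}$ be a nearly orthogonal set of $2d$ distinct unit vectors. Then it is a tight frame, i.e. for every $y\in\mathbb{R}^d$, $$\sum_{i=1}^{2d}\langle x_i,y\rangle^2=2\|y\|^2 .$$
   Context: A set of nonzero vectors in $\mathbb{R}^d$ is nearly orthogonal if, among any three distinct vectors of the set, at least two are orthogonal. $\langle\cdot,\cdot\rangle$ is the Euclidean inner product and $\mathbb{S}^{d-1}$ is the unit sphere in $\mathbb{R}^d$. *)

From mathcomp Require Import all_boot all_order all_algebra.
From mathcomp Require Import reals.
Set Implicit Arguments. Unset Strict Implicit. Unset Printing Implicit Defensive.
Import Order.TTheory GRing.Theory Num.Theory.
Local Open Scope ring_scope.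

Definition dotv (R : pzRingType) (d : nat) (u v : 'rV[R]_d) : R :=
  \sum_(k < d) u 0 k * v 0 k.

Definition sqnorm (R : pzRingType) (d : nat) (u : 'rV[R]_d) : R := dotv u u.

Definition nearly_orthogonal (R : pzRingType) (d : nat) (I : finType)
  (x : I -> 'rV[R]_d) : Prop :=
  forall i j k : I, i != j -> j != k -> i != k ->
    [\/ dotv (x i) (x j) = 0, dotv (x j) (x k) = 0 | dotv (x i) (x k) = 0].

From mathcomp Require Import all_boot all_order all_algebra.
From mathcomp Require Import reals.
From mathcomp Require Import ring lra.
Set Implicit Arguments.
Unset Strict Implicit.
Unset Printing Implicit Defensive.
Import Order.TTheory GRing.Theory Num.Theory.
Local Open Scope ring_scope.

(* Let S = sum_i x_i^T x_i be the frame operator of the family.  For a fixed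
   i, the x_j (j <> i) with <x_i, x_j> <> 0 are pairwise orthogonal by near
   orthogonality, so Bessel's inequality gives sum_j <x_i, x_j>^2 <= 1 + 1.
   Hence tr (S^2) = sum_(i,j) <x_i, x_j>^2 <= 4d = 2 tr S, as tr S = 2d, and
   |S - 2I|_F^2 = tr (S^2) - 4 tr S + 4d <= 0 forces S = 2I. *)

Section DotProduct.
Variables (R : comPzRingType) (d : nat).
Implicit Types u v w : 'rV[R]_d.

Lemma dotvE u v : dotv u v = (u *m v^T) 0 0.
Proof. by rewrite mxE; apply: eq_bigr => k _; rewrite mxE. Qed.

Lemma dotvC u v : dotv u v = dotv v u.
Proof. by apply: eq_bigr => k _; rewrite mulrC. Qed.

Lemma dotvDl u v w : dotv (u + v) w = dotv u w + dotv v w.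
Proof. by rewrite !dotvE mulmxDl mxE. Qed.

Lemma dotvNl u v : dotv (- u) v = - dotv u v.
Proof. by rewrite !dotvE mulNmx mxE. Qed.

Lemma dotvZl a u v : dotv (a *: u) v = a * dotv u v.
Proof. by rewrite !dotvE -scalemxAl mxE. Qed.

Lemma dotv0l v : dotv 0 v = 0.
Proof. by rewrite dotvE mul0mx mxE. Qed.

Lemma dotv_suml (I : Type) (r : seq I) (P : pred I) (F : I -> 'rV[R]_d) v :
  dotv (\sum_(i <- r | P i) F i) v = \sum_(i <- r | P i) dotv (F i) v.
Proof. exact: (big_morph _ (fun u w => dotvDl u w v) (dotv0l v)). Qed.

Lemma sqnormB u v : sqnorm (u - v) = sqnorm u - 2 * dotv u v + sqnorm v.
Proof.
rewrite /sqnorm dotvDl dotvNl !(dotvC _ (u - v)) !(dotvDl, dotvNl) (dotvC v u).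
ring.
Qed.

End DotProduct.

Section Bessel.
Variables (R : realDomainType) (d : nat).
Implicit Types u v : 'rV[R]_d.

Lemma sqnorm_ge0 u : 0 <= sqnorm u.
Proof. by apply: sumr_ge0 => k _; rewrite -expr2 sqr_ge0. Qed.

Lemma bessel_ineq (I : finType) (P : pred I) (e : I -> 'rV[R]_d) v :
  {in P &, forall j k, j != k -> dotv (e j) (e k) = 0} ->
  {in P, forall j, sqnorm (e j) = 1} ->
  \sum_(j | P j) dotv v (e j) ^+ 2 <= sqnorm v.
Proof.
move=> orth unit; set B := \sum_(j | P j) _.
set p := \sum_(j | P j) dotv v (e j) *: e j.
have dotv_p j : P j -> dotv p (e j) = dotv v (e j).
  move=> Pj; rewrite dotv_suml (bigD1 j) //= big1 => [|k /andP[Pk kj]].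
    by rewrite dotvZl addr0 [dotv (e j) _]unit ?mulr1.
  by rewrite dotvZl orth ?mulr0.
have dotv_pp : dotv p p = B.
  by rewrite dotv_suml; apply: eq_bigr => j Pj; rewrite dotvZl dotvC dotv_p.
have dotv_vp : dotv p v = B.
  by rewrite dotv_suml; apply: eq_bigr => j Pj; rewrite dotvZl dotvC expr2.
have := sqnorm_ge0 (v - p).
rewrite sqnormB (dotvC v) dotv_vp [sqnorm p]dotv_pp; lra.
Qed.

End Bessel.

Section TraceCriterion.
Variable R : realDomainType.

Lemma mxtrace_mul_trmx m n (A : 'M[R]_(m, n)) :
  \tr (A *m A^T) = \sum_i \sum_j A i j ^+ 2.
Proof.
by apply: eq_bigr => i _; rewrite mxE; apply: eq_bigr => j _; rewrite mxE expr2.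
Qed.

Lemma mxtrace_mul_trmx_eq0 m n (A : 'M[R]_(m, n)) :
  \tr (A *m A^T) = 0 -> A = 0.
Proof.
rewrite mxtrace_mul_trmx => /eqP; rewrite psumr_eq0 => [/allP sum0|i _]; last first.
  by apply: sumr_ge0 => j _; apply: sqr_ge0.
apply/matrixP => i j; rewrite mxE; apply/eqP; rewrite -sqrf_eq0.
move: (sum0 i (mem_index_enum i)) => /=; rewrite psumr_eq0 => [/allP|k _].
  by move/(_ j (mem_index_enum j)).
exact: sqr_ge0.
Qed.

Lemma sym_mx_eq_scalar_of_trace_sqr n (S : 'M[R]_n) c : S^T = S ->
  \tr (S *m S) <= c * \tr S -> \tr S = c * n%:R -> S = c%:M.
Proof.
move=> symS le_trSS trS; apply/eqP; rewrite -subr_eq0; apply/eqP.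
apply: mxtrace_mul_trmx_eq0; apply/eqP; rewrite eq_le.
apply/andP; split; last first.
  by rewrite mxtrace_mul_trmx; do 2!apply: sumr_ge0 => ? _; exact: sqr_ge0.
rewrite linearB /= tr_scalar_mx symS mulmxBl !mulmxBr mul_mx_scalar mul_scalar_mx.
rewrite -scalar_mxM !raddfB /= !mxtraceZ mxtrace_scalar -mulr_natr.
rewrite trS in le_trSS *; lra.
Qed.

End TraceCriterion.

Section FrameOperator.
Variables (R : comPzRingType) (n d : nat) (x : 'I_n -> 'rV[R]_d).

Definition frame_mx : 'M[R]_(n, d) := \matrix_i x i.

Definition frame_op : 'M[R]_d := frame_mx^T *m frame_mx.

Lemma gram_mxE i j : (frame_mx *m frame_mx^T) i j = dotv (x i) (x j).
Proof. by rewrite mxE; apply: eq_bigr => k _; rewrite !mxE. Qed.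

Lemma frame_op_sym : frame_op^T = frame_op.
Proof. by rewrite trmx_mul trmxK. Qed.

Lemma mxtrace_frame_op : \tr frame_op = \sum_i sqnorm (x i).
Proof. by rewrite mxtrace_mulC; apply: eq_bigr => i _; rewrite gram_mxE. Qed.

Lemma mxtrace_frame_op_sqr :
  \tr (frame_op *m frame_op) = \sum_i \sum_j dotv (x i) (x j) ^+ 2.
Proof.
rewrite /frame_op mulmxA mxtrace_mulC !mulmxA -(mulmxA _ _ frame_mx^T).
apply: eq_bigr => i _; rewrite mxE; apply: eq_bigr => j _.
by rewrite !gram_mxE dotvC expr2.
Qed.

Lemma sum_dotv_sqr_frame_op y :
  \sum_i dotv (x i) y ^+ 2 = dotv (y *m frame_op) y.
Proof.
rewrite /frame_op dotvE !mulmxA -(mulmxA _ frame_mx).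
have -> : frame_mx *m y^T = (y *m frame_mx^T)^T by rewrite trmx_mul trmxK.
rewrite -dotvE [RHS]/dotv; apply: eq_bigr => i _.
by rewrite !mxE dotvC expr2; congr (_ * _); apply: eq_bigr => k _; rewrite !mxE.
Qed.

End FrameOperator.

Section NearlyOrthogonal.
Variables (R : realDomainType) (d : nat) (I : finType) (x : I -> 'rV[R]_d).
Hypotheses (x_nearly_orth : nearly_orthogonal x)
           (x_unit : forall i, sqnorm (x i) = 1).

Lemma nearly_orthogonal_gram_row_le i : \sum_j dotv (x i) (x j) ^+ 2 <= 2.
Proof.
pose P j := (j != i) && (dotv (x i) (x j) != 0).
have orthP : {in P &, forall j k, j != k -> dotv (x j) (x k) = 0}.
  move=> j k /andP[ji xij] /andP[ki xik] jk.
  have [ij ik] : i != j /\ i != k by rewrite !(eq_sym i).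
  by move: xij xik; case: (x_nearly_orth ij jk ik) => [->|//|->]; rewrite eqxx.
have := bessel_ineq (x i) orthP (in1W x_unit); rewrite x_unit => besselP.
rewrite (bigD1 i) //= [dotv (x i) (x i)]x_unit expr1n.
rewrite (bigID (fun j => dotv (x i) (x j) == 0)) /= big1 => [|j /andP[_ /eqP->]].
  by rewrite add0r; lra.
by rewrite expr0n.
Qed.

End NearlyOrthogonal.

Theorem corollary3p2 (R : realType) (d : nat) (hd : (0 < d)%N)
  (x : 'I_(2 * d) -> 'rV[R]_d)
  (xinj : injective x)
  (xunit : forall i, sqnorm (x i) = 1)
  (xno : nearly_orthogonal x) :
  forall y : 'rV[R]_d, \sum_(i < 2 * d) (dotv (x i) y) ^+ 2 = 2 * sqnorm y.
Proof.
(* [hd] and [xinj] are unused: the argument never needs the vectors to be distinct. *)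
have trS : \tr (frame_op x) = 2 * d%:R.
  by rewrite mxtrace_frame_op (eq_bigr _ (fun i _ => xunit i)) sumr_const card_ord natrM.
have S_eq : frame_op x = 2%:M.
  apply: sym_mx_eq_scalar_of_trace_sqr (frame_op_sym x) _ trS.
  rewrite mxtrace_frame_op_sqr mxtrace_frame_op mulr_sumr; apply: ler_sum => i _.
  by rewrite xunit mulr1 nearly_orthogonal_gram_row_le.
by move=> y; rewrite sum_dotv_sqr_frame_op S_eq mul_mx_scalar dotvZl.
Qed.
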